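(* In the single-authority allocation model described in the context, any monotone adaptive priority mechanism $A$ implements an essentially unique allocation in each state $\omega$.
   Context: An authority allocates a resource of measure $q\in(0,1)$ to agents with types $\theta=(s,m)\in\Theta=[0,1]\times\mathcal M$ (score $s(\theta)$, group $m(\theta)$, $\mathcal M$ finite). A state $\omega$ is a distribution over $\Theta$ with density; $F_\omega$ denotes the type measure and $f_\omega(s,m)$ its density. An allocation is a measurable $\mu:\Theta\to\{0,1\}$; allocations are essentially the same if they coincide up to a measure-zero set. $x_m(\mu,\omega)=\int_0^1\mu(s,m)f_\omega(s,m)ds$. An adaptive priority policy is $A=\{A_m\}_{m\in\mathcal M}$, $A_m:\mathbb R\times[0,1]\to\mathbb R$; it implements $\mu$ in state $\omega$ if (1) $\mu(\theta)=1$ iff for all $\theta'$ with $\mu(\theta')=0$, $A_{m(\theta)}(x_{m(\theta)}(\mu,\omega),s(\theta))>A_{m(\theta')}(x_{m(\theta')}(\mu,\omega),s(\theta'))$; and (2) $\sum_mx_m(\mu,\omega)=q$. $A$ is monotone if $A_m(\cdot,s)$ is decreasing for all $m,s$ and $A_m(y_m,\cdot)$ is strictly increasing for all $m,y_m$. *)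

From HB Require Import structures.
From mathcomp Require Import all_boot all_order all_algebra.
From mathcomp Require Import all_classical all_reals all_analysis.
Set Implicit Arguments. Unset Strict Implicit. Unset Printing Implicit Defensive.
Import Order.TTheory GRing.Theory Num.Theory.
Local Open Scope classical_set_scope.
Local Open Scope ring_scope.

Section Model.
Variables (R : realType) (M : finType).

(* Types theta = (s, m) with s in [0,1]. Functions are written in curried
   form  m -> s -> ... ; only their values on s in [0,1] matter. *)
Definition scores : set R := `[0, 1].

(* A state omega, given by its density f m s = f_omega(s, m). *)
Definition is_state (f : M -> R -> R) : Prop :=
  [/\ (forall m s, 0 <= f m s),
      (forall m, measurable_fun scores (f m)),
      (forall m, (@lebesgue_measure R).-integrable scores (fun s => (f m s)%:E)) &
      \sum_(m : M) Rintegral (@lebesgue_measure R) scores (f m) = 1].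

Definition is_allocation (mu : M -> R -> bool) : Prop :=
  forall m, measurable_fun scores (fun s => ((mu m s)%:R : R)).

Definition xm (mu : M -> R -> bool) (f : M -> R -> R) (m : M) : R :=
  Rintegral (@lebesgue_measure R) scores (fun s => (mu m s)%:R * f m s).

Definition policy := M -> R -> R -> R.

Definition implements (A : policy) (q : R) (mu : M -> R -> bool)
    (f : M -> R -> R) : Prop :=
  (forall m s, s \in scores ->
     (mu m s <->
      (forall m' s', s' \in scores -> ~~ mu m' s' ->
         A m' (xm mu f m') s' < A m (xm mu f m) s)))
  /\ \sum_(m : M) xm mu f m = q.

Definition monotone_policy (A : policy) : Prop :=
  (forall m s y y', s \in scores -> y <= y' -> A m y' s <= A m y s) /\
  (forall m y s s', s \in scores -> s' \in scores -> s < s' -> A m y s < A m y s').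

(* Essentially the same: they differ on an F_omega-null set of types. *)
Definition ess_same (f : M -> R -> R) (mu mu' : M -> R -> bool) : Prop :=
  forall m, (\int[@lebesgue_measure R]_(s in scores)
               (((mu m s != mu' m s)%:R * f m s)%:E) = 0)%E.

End Model.

From HB Require Import structures.
From mathcomp Require Import all_boot all_order all_algebra.
From mathcomp Require Import all_classical all_reals all_analysis.
From mathcomp Require Import measurable_realfun.
Import Order.TTheory GRing.Theory Num.Theory.
Local Open Scope ring_scope.

(* If a group m had a larger
   quota under mu' and a group k a larger quota under mu, some score s of m
   would be admitted only under mu' and some score t of k only under mu;
   comparing the priorities of s and t under both allocations, and using that
   A is decreasing in the quota, yields a cycle of strict inequalities.  As
   both quota vectors sum to q, they coincide.  Then both allocations rank
   types by the same priorities A_m(x_m, s), so one admitted set contains the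
   other, and equal quotas make their difference null. *)

Lemma eq_from_ler_sum (R : numDomainType) (I : finType) (a b : I -> R) :
  \sum_i a i = \sum_i b i -> (forall i, a i <= b i) -> forall i, a i = b i.
Proof.
move=> sum_ab le_ab i; apply/eqP; rewrite eq_sym -subr_eq0; apply/eqP.
apply: (@psumr_eq0P _ _ predT (fun i => b i - a i)) => //.
  by move=> j _; rewrite subr_ge0.
by rewrite sumrB sum_ab subrr.
Qed.

Section IndicatorIntegral.
Context {d : measure_display} {T : measurableType d} {R : realType}.
Context {mu : {measure set T -> \bar R}} {D : set T} {g : T -> R}.
Hypotheses (mD : measurable D) (mg : measurable_fun D g).
Hypothesis ig : mu.-integrable D (EFin \o g).

Lemma integrable_indicatorM {b : T -> bool} :
  measurable_fun D (fun x => ((b x)%:R : R)) ->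
  mu.-integrable D (EFin \o (fun x => (b x)%:R * g x)).
Proof.
move=> mb; apply: le_integrable ig => //.
  by apply/measurable_EFinP; exact: measurable_funM.
move=> x _ /=; rewrite lee_fin normrM.
by case: (b x); rewrite /= ?normr1 ?mul1r ?normr0 ?mul0r.
Qed.

Lemma integral_indicator_neqM_eq0 {b b' : T -> bool} :
  measurable_fun D (fun x => ((b x)%:R : R)) ->
  measurable_fun D (fun x => ((b' x)%:R : R)) ->
  (forall x, D x -> b x -> b' x) ->
  Rintegral mu D (fun x => (b x)%:R * g x) = Rintegral mu D (fun x => (b' x)%:R * g x) ->
  (\int[mu]_(x in D) ((b x != b' x)%:R * g x)%:E = 0)%E.
Proof.
move=> mb mb' bb' int_eq.
have ib := integrable_indicatorM mb; have ib' := integrable_indicatorM mb'.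
transitivity ((Rintegral mu D (fun x => (b' x)%:R * g x))%:E
              - (Rintegral mu D (fun x => (b x)%:R * g x))%:E)%E;
  last by rewrite int_eq subee.
rewrite /Rintegral !fineK ?integrable_fin_num // -integralB_EFin //.
apply: eq_integral => x /[1!inE] Dx /=; rewrite -EFinB; congr EFin.
case: (boolP (b x)) => [bx|_]; first by rewrite (bb' x Dx bx) /= subrr mul0r.
by case: (b' x); rewrite /= ?mul0r ?mul1r ?subr0.
Qed.

Hypothesis g_ge0 : forall x, D x -> 0 <= g x.

Lemma le_Rintegral_indicatorM {b b' : T -> bool} :
  measurable_fun D (fun x => ((b x)%:R : R)) ->
  measurable_fun D (fun x => ((b' x)%:R : R)) ->
  (forall x, D x -> b x -> b' x) ->
  Rintegral mu D (fun x => (b x)%:R * g x) <= Rintegral mu D (fun x => (b' x)%:R * g x).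
Proof.
move=> mb mb' bb'; apply: le_Rintegral => //; try exact: integrable_indicatorM.
move=> x Dx; case: (boolP (b x)) => [bx| _].
  by rewrite (bb' x Dx bx).
by case: (b' x); rewrite /= ?mul0r ?mul1r ?g_ge0.
Qed.

End IndicatorIntegral.

Lemma ess_same_sym (R : realType) (M : finType) (f : M -> R -> R) mu mu' :
  ess_same f mu mu' -> ess_same f mu' mu.
Proof. by move=> same m; rewrite -(same m); apply: eq_integral => s _; rewrite eq_sym. Qed.

Lemma measurable_scores {R : realType} : measurable (@scores R).
Proof. exact: measurable_itv. Qed.

Section Implementation.
Context {R : realType} {M : finType} {q : R} {f : M -> R -> R} {A : policy R M}.
Hypothesis state_f : is_state f.
Hypothesis A_decr :
  forall m {s y y'}, s \in (@scores R) -> y <= y' -> A m y' s <= A m y s.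

Lemma le_xm {mu mu' : M -> R -> bool} m :
  is_allocation mu -> is_allocation mu' ->
  (forall s, s \in (@scores R) -> mu m s -> mu' m s) -> xm mu f m <= xm mu' f m.
Proof.
case: state_f => f_ge0 mf intf _ amu amu' sub.
apply: (le_Rintegral_indicatorM (mu := lebesgue_measure) measurable_scores (mf m) (intf m)
  (fun s _ => f_ge0 m s) (amu m) (amu' m)).
by move=> s s01; apply: sub; exact: mem_set.
Qed.

Lemma ess_same_of_sub {mu mu' : M -> R -> bool} :
  is_allocation mu -> is_allocation mu' ->
  (forall m, xm mu f m = xm mu' f m) ->
  (forall m s, s \in (@scores R) -> mu m s -> mu' m s) -> ess_same f mu mu'.
Proof.
move=> amu amu' xm_eq sub m.
case: state_f => _ mf intf _.
apply: (integral_indicator_neqM_eq0 (mu := lebesgue_measure) measurable_scores (mf m) (intf m)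
  (amu m) (amu' m)) (xm_eq m) => s s01.
by apply: sub; exact: mem_set.
Qed.

Lemma implements_priority_lt {mu m s k t} :
  implements A q mu f -> s \in (@scores R) -> t \in (@scores R) ->
  mu m s -> ~~ mu k t -> A k (xm mu f k) t < A m (xm mu f m) s.
Proof. by move=> [impl _] s01 t01 mu_s; exact: (impl m s s01).1 mu_s k t t01. Qed.

Lemma lt_xm_witness {mu mu' : M -> R -> bool} {m} :
  is_allocation mu -> is_allocation mu' -> xm mu f m < xm mu' f m ->
  exists2 s, s \in (@scores R) & mu' m s && ~~ mu m s.
Proof.
move=> amu amu'; rewrite ltNge => /negP not_le; apply: contrapT => no_s.
apply: not_le; apply: le_xm => // s s01 mu'_s; apply: contrapT => /negP mu_s.
by apply: no_s; exists s; rewrite // mu'_s.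
Qed.

Section TwoImplementations.
Context {mu mu' : M -> R -> bool}.
Hypotheses (amu : is_allocation mu) (amu' : is_allocation mu').
Hypotheses (impl : implements A q mu f) (impl' : implements A q mu' f).

Lemma implements_no_quota_crossing m k :
  xm mu f m < xm mu' f m -> xm mu' f k < xm mu f k -> False.
Proof.
move=> lt_m lt_k.
have [s s01 /andP [mu's not_mus]] := lt_xm_witness amu amu' lt_m.
have [t t01 /andP [mut not_mu't]] := lt_xm_witness amu' amu lt_k.
have lt_mu := implements_priority_lt impl t01 s01 mut not_mus.
have lt_mu' := implements_priority_lt impl' s01 t01 mu's not_mu't.
have := lt_trans (lt_le_trans lt_mu (A_decr k t01 (ltW lt_k)))
                 (lt_le_trans lt_mu' (A_decr m s01 (ltW lt_m))).
by rewrite ltxx.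
Qed.

Lemma implements_eq_xm m : xm mu f m = xm mu' f m.
Proof.
have sum_eq : \sum_k xm mu f k = \sum_k xm mu' f k by rewrite impl.2 impl'.2.
case: (pselect (exists k, xm mu f k < xm mu' f k)) => [[k lt_k]|no_lt].
  apply: eq_from_ler_sum sum_eq _ m => j; rewrite leNgt; apply/negP.
  exact: implements_no_quota_crossing lt_k.
apply/esym; apply: eq_from_ler_sum m; first by rewrite sum_eq.
by move=> j; rewrite leNgt; apply/negP => lt_j; apply: no_lt; exists j.
Qed.

Lemma implements_sub_or_sup :
  (forall m s, s \in (@scores R) -> mu m s -> mu' m s) \/
  (forall m s, s \in (@scores R) -> mu' m s -> mu m s).
Proof.
case: (pselect (forall m s, s \in (@scores R) -> mu m s -> mu' m s)) => [|not_sub];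
  [by left | right].
move=> k t t01 mu't; apply: contrapT => /negP not_mut.
apply: not_sub => m s s01 mus; apply: contrapT => /negP not_mu's.
have := implements_priority_lt impl s01 t01 mus not_mut.
have := implements_priority_lt impl' t01 s01 mu't not_mu's.
rewrite !implements_eq_xm => lt1 lt2.
by have := lt_trans lt1 lt2; rewrite ltxx.
Qed.

End TwoImplementations.

End Implementation.

Theorem proposition2 (R : realType) (M : finType) (q : R)
    (hq : 0 < q < 1) (f : M -> R -> R) (A : policy R M) :
  is_state f -> monotone_policy A ->
  forall mu mu' : M -> R -> bool,
    is_allocation mu -> is_allocation mu' ->
    implements A q mu f -> implements A q mu' f ->
    ess_same f mu mu'.
Proof.
move=> state_f [A_decr _] mu mu' amu amu' impl impl'.
have xm_eq := implements_eq_xm state_f A_decr amu amu' impl impl'.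
have [sub|sup] := implements_sub_or_sup state_f A_decr amu amu' impl impl'.
  exact: ess_same_of_sub.
by apply/ess_same_sym/ess_same_of_sub => // m; rewrite xm_eq.
Qed.
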